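(* Assume $F=f+h$ attains its minimum at some $x^*$, let $F^*=F(x^* )$, and consider the Regularized Composite Tensor Method $x_0\in\operatorname{dom}h$, $x_{k+1}=T_H(x_k)$, $k\ge0$, with $H=pL_p$. Assume $D=\sup_{x\in\operatorname{dom}h}\{\|x-x^*\|:F(x)\le F(x_0)\}<+\infty$. Then $$F(x_k)-F^*\le\frac{(p+1)(2p)^p}{p!}\cdot\frac{L_pD^{p+1}}{(k-1)^p},\qquad k\ge2.$$
   Context: $\mathbb{E}$ is a finite-dimensional real vector space with dual $\mathbb{E}^*$; $B:\mathbb{E}\to\mathbb{E}^*$ is a fixed self-adjoint positive-definite operator, $\|x\|=\langle Bx,x\rangle^{1/2}$, $\|g\|_*=\langle g,B^{-1}g\rangle^{1/2}$. Let $p\ge 2$ be an integer, $h:\mathbb{E}\to\mathbb{R}\cup\{+\infty\}$ proper closed convex, and $f$ convex and $p$ times differentiable on an open convex set containing $\operatorname{dom}h$, with $\|D^pf(x)-D^pf(y)\|\le L_p\|x-y\|$ for $x,y\in\operatorname{dom}h$, $0<L_p<\infty$, where for a symmetric $p$-linear form $\|A\|=\max_{\|u\|\le1}|A[u]^p|$. $F=f+h$. Taylor polynomial $\Omega_p(f,x;y)=f(x)+\sum_{k=1}^p\frac1{k!}D^kf(x)[y-x]^k$. For $x\in\operatorname{dom}h$, $T_H(x)=\arg\min_{y\in\mathbb{E}}\{\Omega_p(f,x;y)+\frac{H}{(p+1)!}\|y-x\|^{p+1}+h(y)\}$. *)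

From HB Require Import structures.
From mathcomp Require Import all_boot all_order all_algebra.
From mathcomp Require Import all_classical all_reals all_analysis.
Set Implicit Arguments. Unset Strict Implicit. Unset Printing Implicit Defensive.
Import Order.TTheory GRing.Theory Num.Theory.
Import numFieldNormedType.Exports.
Local Open Scope classical_set_scope.
Local Open Scope ring_scope.

Section Defs.
Variables (R : realType) (n : nat).
Notation E := 'rV[R]_n.

Definition Bnorm (B : 'M[R]_n) (x : E) : R := Num.sqrt ((x *m B *m x^T) 0 0).

Definition selfadj_posdef (B : 'M[R]_n) : Prop :=
  B^T = B /\ forall x : E, x != 0 -> 0 < (x *m B *m x^T) 0 0.

Definition convex_on (U : set E) (f : E -> R) : Prop :=
  forall x y : E, U x -> U y -> forall t : R, 0 <= t <= 1 ->
    f (t *: x + (1 - t) *: y) <= t * f x + (1 - t) * f y.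

Definition dom (h : E -> \bar R) : set E := [set x | (h x < +oo)%E].

Definition proper_closed_convex (h : E -> \bar R) : Prop :=
  (forall x, h x != -oo%E) /\ (exists x, dom h x) /\
  (forall t : R, closed [set x | (h x <= t%:E)%E]) /\
  (forall x y : E, forall t : R, 0 <= t <= 1 ->
     (h (t *: x + (1 - t) *: y)%R <= t%:E * h x + (1 - t)%:E * h y)%E).

(* Derivative tensors: T k x s is the partial derivative
   d^k f / dx_{s_1} ... dx_{s_k} (x), for s a list of k coordinate indices.
   [deriv_family p U f T] says that f is p times (Frechet) differentiable on U,
   with T k the k-th derivative (in coordinates). *)
Definition deriv_family (p : nat) (U : set E) (f : E -> R)
    (T : nat -> E -> seq 'I_n -> R) : Prop :=
  (forall x, T 0%N x [::] = f x) /\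
  (forall k, (k < p)%N -> forall x, U x -> forall s : seq 'I_n, size s = k ->
     differentiable (fun y => T k y s) x /\
     forall i : 'I_n, 'd (fun y => T k y s) x (delta_mx 0 i) = T k.+1 x (rcons s i)).

Definition Dpow (T : nat -> E -> seq 'I_n -> R) (k : nat) (x u : E) : R :=
  \sum_(s : k.-tuple 'I_n) T k x (tval s) * \prod_(j <- tval s) u 0 j.

Definition Omega (f : E -> R) (T : nat -> E -> seq 'I_n -> R) (p : nat) (x y : E) : R :=
  f x + \sum_(1 <= k < p.+1) (k`!%:R)^-1 * Dpow T k x (y - x).

Definition is_TH (B : 'M[R]_n) (f : E -> R) (h : E -> \bar R)
    (T : nat -> E -> seq 'I_n -> R) (p : nat) (H : R) (x y : E) : Prop :=
  forall z : E,
    ((Omega f T p x y + H / (p.+1)`!%:R * Bnorm B (y - x) ^+ p.+1)%:E + h y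
     <= (Omega f T p x z + H / (p.+1)`!%:R * Bnorm B (z - x) ^+ p.+1)%:E + h z)%E.

End Defs.

(* Each step of the method satisfies, for every z in dom h,
     F(x_{k+1}) <= F(z) + L_p/p! ||z - x_k||^{p+1}.
   Indeed the Taylor remainder of f is at most L_p ||y - x||^{p+1}/(p+1)!, so with
   H = p L_p the regularized model majorizes F, while at z it exceeds F(z) by at most
   (p+1) L_p/(p+1)! ||z - x_k||^{p+1}.  The values F(x_k) decrease, so ||x_k - x*|| <= D,
   and taking z = x_k + t (x* - x_k) with convexity gives, for d_k = F(x_k) - F*,
     d_{k+1} <= (1 - t) d_k + (L_p D^{p+1}/p!) t^{p+1}      for all t in [0, 1].
   The choice t = 2p/m turns this into d_{m+1} <= (p+1)(2p)^p/m^p * L_p D^{p+1}/p!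
   by induction on m. *)

From HB Require Import structures.
From mathcomp Require Import all_boot all_order all_algebra.
From mathcomp Require Import all_classical all_reals all_analysis.
From mathcomp Require Import ring lra zify.
Set Implicit Arguments. Unset Strict Implicit. Unset Printing Implicit Defensive.
Import Order.TTheory GRing.Theory Num.Theory.
Import numFieldNormedType.Exports.
Local Open Scope classical_set_scope.
Local Open Scope ring_scope.

Section BigDerive.
Variables (R : numFieldType) (V W : normedModType R).

Lemma is_derive_bigsum (I : Type) (r : seq I) (F : I -> V -> W) (dF : I -> W)
    (x v : V) :
  (forall i, is_derive x v (F i) (dF i)) ->
  is_derive x v (fun y => \sum_(i <- r) F i y) (\sum_(i <- r) dF i).
Proof.
move=> dFi; elim: r => [|a r IHr].
  have -> : (fun y => \sum_(i <- [::]) F i y) = cst 0.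
    by apply/funext => y; rewrite big_nil.
  by rewrite big_nil; exact: is_derive_cst.
have -> : (fun y => \sum_(i <- a :: r) F i y) = F a + (fun y => \sum_(i <- r) F i y).
  by apply/funext => y; rewrite big_cons.
by rewrite big_cons; exact: is_deriveD.
Qed.

End BigDerive.

Section TaylorReal.
Variable R : realType.

Lemma is_derive_monomial (c t : R) (k : nat) :
  is_derive t 1 (fun s : R => c * s ^+ k) (c * (k%:R * t ^+ k.-1)).
Proof.
have -> : (fun s : R => c * s ^+ k) = c *: (@id R ^+ k).
  by apply/funext => s; rewrite /= exprfctE.
apply: is_derive_eq (is_deriveZ c (is_deriveX k (is_derive_id t 1))) _.
by rewrite [_ *: 1]mulr1.
Qed.

Lemma fact_neq0 (k : nat) : k`!%:R != 0 :> R.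
Proof. by rewrite pnatr_eq0 -lt0n fact_gt0. Qed.

Lemma le_pow_bound_of_derive (g dg : R -> R) (M : R) (q : nat) :
  g 0 = 0 -> (forall t : R, 0 <= t <= 1 -> is_derive t 1 g (dg t)) ->
  (forall t : R, 0 <= t <= 1 -> dg t <= M * (t ^+ q / q`!%:R)) ->
  forall t : R, 0 <= t <= 1 -> g t <= M * (t ^+ q.+1 / q.+1`!%:R).
Proof.
move=> g0 dg_g dg_le t t01.
pose c := M / q.+1`!%:R.
pose psi (s : R) := g s - c * s ^+ q.+1.
have dpsi (s : R) : 0 <= s <= 1 -> is_derive s 1 psi (dg s - c * (q.+1%:R * s ^+ q)).
  by move=> s01; exact: is_deriveB (dg_g s s01) (is_derive_monomial c s q.+1).
have in01 (s : R) : s \in `]0, 1[ -> 0 <= s <= 1.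
  by rewrite in_itv /= => /andP[s0 s1]; rewrite !ltW.
have : psi t <= psi 0.
  apply: (@ler0_derive1_le_cc _ psi 0 1) => //.
  - by move=> s /in01 s01; case: (dpsi s s01).
  - move=> s /in01 s01; rewrite derive1E; have [_ ->] := dpsi s s01; rewrite subr_le0.
    have -> : c * (q.+1%:R * s ^+ q) = M * (s ^+ q / q`!%:R).
      rewrite /c factS natrM; field.
      by rewrite fact_neq0 addrC natr1 pnatr_eq0.
    exact: dg_le.
  - apply: derivable_within_continuous => s; rewrite in_itv /= => s01.
    by case: (dpsi s s01).
  - by rewrite in_itv /= lexx ler01.
  - by case/andP: t01.
by rewrite /psi g0 expr0n /= mulr0 subrr subr_le0 /c mulrAC -mulrA.
Qed.

Lemma norm_pow_bound_of_derive (g dg : R -> R) (M : R) (q : nat) :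
  g 0 = 0 -> (forall t : R, 0 <= t <= 1 -> is_derive t 1 g (dg t)) ->
  (forall t : R, 0 <= t <= 1 -> `|dg t| <= M * (t ^+ q / q`!%:R)) ->
  forall t : R, 0 <= t <= 1 -> `|g t| <= M * (t ^+ q.+1 / q.+1`!%:R).
Proof.
move=> g0 dg_g dg_le t t01; rewrite ler_norml; apply/andP; split.
  rewrite lerNl; apply: (@le_pow_bound_of_derive (- g) (fun s => - dg s)) => //.
  - by rewrite opprfctE g0 oppr0.
  - by move=> s s01; exact: is_deriveN (dg_g s s01).
  - by move=> s s01; apply: le_trans (ler_norm _) _; rewrite normrN; exact: dg_le.
apply: (@le_pow_bound_of_derive g dg) => // s s01.
by apply: le_trans (ler_norm _) _; exact: dg_le.
Qed.

Lemma is_derive_taylor_poly (a : nat -> R) (q : nat) (t : R) :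
  is_derive t 1 (fun s : R => \sum_(k < q.+1) a k * (s ^+ k / k`!%:R))
    (\sum_(k < q) a k.+1 * (t ^+ k / k`!%:R)).
Proof.
have -> : (fun s : R => \sum_(k < q.+1) a k * (s ^+ k / k`!%:R)) =
    cst (a 0%N) + (fun s => \sum_(k < q) (a k.+1 / k.+1`!%:R) * s ^+ k.+1).
  apply/funext => s; rewrite big_ord_recl /= expr0 divr1 mulr1; congr (_ + _).
  by apply: eq_bigr => i _; rewrite /bump add1n mulrA mulrAC.
rewrite -[X in is_derive _ _ _ X]add0r; apply: is_deriveD.
apply: is_derive_eq (is_derive_bigsum _ (fun i => is_derive_monomial _ t _)) _.
apply: eq_bigr => i _ /=; rewrite factS natrM; field.
by rewrite fact_neq0 addrC natr1 pnatr_eq0.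
Qed.

Lemma taylor_remainder_le (q : nat) (phi : nat -> R -> R) (M : R) :
  (forall k, (k < q)%N -> forall t : R, 0 <= t <= 1 ->
     is_derive t 1 (phi k) (phi k.+1 t)) ->
  (forall t : R, 0 <= t <= 1 -> `|phi q t - phi q 0| <= M * t) ->
  forall t : R, 0 <= t <= 1 ->
  `|phi 0%N t - \sum_(k < q.+1) phi k 0 * (t ^+ k / k`!%:R)|
     <= M * (t ^+ q.+1 / q.+1`!%:R).
Proof.
elim: q phi => [|q IHq] phi dphi phi_lip.
  move=> t t01; rewrite big_ord1 expr0 divr1 mulr1 expr1 divr1; exact: phi_lip.
apply: (@norm_pow_bound_of_derive
  (fun s => phi 0%N s - \sum_(k < q.+2) phi k 0 * (s ^+ k / k`!%:R))
  (fun s => phi 1%N s - \sum_(k < q.+1) phi k.+1 0 * (s ^+ k / k`!%:R))).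
- rewrite big_ord_recl expr0 divr1 mulr1 big1 ?addr0 ?subrr // => i _.
  by rewrite expr0n /= mul0r mulr0.
- move=> s s01.
  exact: is_deriveB (dphi 0%N isT s s01) (is_derive_taylor_poly (phi^~ 0) q.+1 s).
- by apply: (IHq (fun k => phi k.+1)) => // k kq; exact: dphi.
Qed.

End TaylorReal.

Section RecurrenceRate.
Variable R : realFieldType.

Definition tensor_rate (p : nat) (a : R) : R := p.+1%:R * (2 * p%:R) ^+ p / a ^+ p.

Lemma exprD1_sub_le (a : R) (p : nat) : 0 <= a ->
  ((a + 1) ^+ p - a ^+ p) * (a + 1) <= p%:R * (a + 1) ^+ p.
Proof.
move=> a0; elim: p => [|p IHp]; first by rewrite !expr0 subrr !mul0r.
have apS : a ^+ p <= (a + 1) ^+ p by apply: lerXn2r; rewrite ?nnegrE //; lra.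
have ap0 : 0 <= a ^+ p by exact: exprn_ge0.
rewrite !exprS -natr1; nra.
Qed.

Lemma tensor_rate_step (p : nat) (a : R) : (1 <= p)%N -> 2 * p%:R <= a ->
  (1 - 2 * p%:R / a) * tensor_rate p a + (2 * p%:R / a) ^+ p.+1
    <= tensor_rate p (a + 1).
Proof.
move=> p1 pa; rewrite /tensor_rate.
have p1r : 1 <= p%:R :> R by rewrite ler1n.
have a0 : 0 < a by lra.
set K := (2 * p%:R) ^+ p; set P := a ^+ p; set Q := (a + 1) ^+ p.
have K0 : 0 <= K by apply: exprn_ge0; lra.
have P0 : 0 < P by exact: exprn_gt0.
have PQ : P <= Q by apply: lerXn2r; rewrite ?nnegrE; lra.
have Q0 : 0 < Q by lra.
have aQP : a * (Q - P) <= p%:R * Q.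
  by have := exprD1_sub_le p (ltW a0); rewrite -/P -/Q; nra.
rewrite expr_div_n exprS -/K exprS -/P.
have -> : (1 - 2 * p%:R / a) * (p.+1%:R * K / P) + 2 * p%:R * K / (a * P)
   = ((a - 2 * p%:R) * p.+1%:R * K * Q + 2 * p%:R * K * Q) / (a * P * Q).
  by field; rewrite !gt_eqF.
have -> : p.+1%:R * K / Q = (p.+1%:R * K * a * P) / (a * P * Q).
  by field; rewrite !gt_eqF.
rewrite ler_pM2r ?invr_gt0 ?mulr_gt0 // -natr1.
have h2 : (p%:R + 1) * K * (a * (Q - P)) <= (p%:R + 1) * K * (p%:R * Q).
  by apply: ler_wpM2l => //; apply: mulr_ge0 => //; lra.
have h3 : 0 <= (p%:R - 1) * p%:R * K * Q.
  by rewrite !mulr_ge0 //; lra.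
nra.
Qed.

Lemma tensor_rate_ge1 (p : nat) (a : R) : 0 < a <= 2 * p%:R -> 1 <= tensor_rate p a.
Proof.
case/andP=> a0 a2p; rewrite /tensor_rate ler_pdivlMr ?exprn_gt0 // mul1r.
have : a ^+ p <= (2 * p%:R) ^+ p by apply: lerXn2r; rewrite ?nnegrE; lra.
have : 0 <= (2 * p%:R) ^+ p :> R by apply: exprn_ge0; lra.
rewrite -natr1; nra.
Qed.

Lemma recurrence_rate (p : nat) (C : R) (d : nat -> R) : (1 <= p)%N -> 0 <= C ->
  (forall k (t : R), 0 <= t <= 1 -> d k.+1 <= (1 - t) * d k + C * t ^+ p.+1) ->
  forall m, (1 <= m)%N -> d m.+1 <= tensor_rate p m%:R * C.
Proof.
move=> p1 C0 rec.
have d_le_C k : d k.+1 <= C.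
  elim: k => [|k IHk].
    by have := rec 0%N 1; rewrite subrr mul0r add0r expr1n mulr1; apply; rewrite lexx ler01.
  apply: le_trans IHk.
  by have := rec k.+1 0; rewrite subr0 mul1r expr0n mulr0 addr0; apply; rewrite lexx ler01.
elim=> // m IHm _.
have m0 : 0 < m.+1%:R :> R by rewrite ltr0n.
have [m2p | pm] := leqP m.+1 (2 * p).
  apply: le_trans (d_le_C _) _; rewrite -[X in X <= _]mul1r ler_wpM2r //.
  by apply: tensor_rate_ge1; rewrite m0 -natrM ler_nat.
have m1 : (1 <= m)%N by lia.
have pm' : 2 * p%:R <= m%:R :> R by rewrite -natrM ler_nat -ltnS.
pose t : R := 2 * p%:R / m%:R.
have t01 : 0 <= t <= 1.
  by rewrite divr_ge0 ?ler_pdivrMr ?mul1r ?ltr0n //=; lra.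
apply: le_trans (rec m.+1 t t01) _.
have t1 : 0 <= 1 - t by case/andP: t01 => _; lra.
apply: le_trans (_ : (1 - t) * (tensor_rate p m%:R * C) + C * t ^+ p.+1 <= _).
  by rewrite lerD2r; apply: ler_wpM2l => //; exact: IHm.
rewrite -natr1; apply: le_trans (ler_wpM2r C0 (tensor_rate_step p1 pm')).
by rewrite -/t; lra.
Qed.

End RecurrenceRate.

Section BnormTheory.
Variables (R : realType) (n : nat) (B : 'M[R]_n).
Implicit Types x : 'rV[R]_n.

Lemma Bnorm_ge0 x : 0 <= Bnorm B x.
Proof. exact: sqrtr_ge0. Qed.

Lemma BnormZ (c : R) x : Bnorm B (c *: x) = `|c| * Bnorm B x.
Proof.
rewrite /Bnorm.
have -> : (c *: x)^T = c *: x^T by apply/matrixP => i j; rewrite !mxE.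
rewrite -scalemxAl -scalemxAr -scalemxAl !mxE mulrA -expr2.
by rewrite sqrtrM ?sqr_ge0 // sqrtr_sqr.
Qed.

Lemma Bnorm0 : Bnorm B 0 = 0.
Proof. by rewrite -(scale0r 0) BnormZ normr0 mul0r. Qed.

Lemma Bnorm_eq0 x : selfadj_posdef B -> Bnorm B x = 0 -> x = 0.
Proof.
move=> [_ posB] /eqP; rewrite sqrtr_eq0; apply: contraTeq => x0.
by rewrite -ltNge posB.
Qed.

End BnormTheory.

Section DerivativeTensors.
Variables (R : realType) (n : nat) (T : nat -> 'rV[R]_n -> seq 'I_n -> R).
Implicit Types x u : 'rV[R]_n.

Lemma prod_scale_entries (c : R) u (s : seq 'I_n) :
  \prod_(j <- s) (c *: u) 0 j = c ^+ size s * \prod_(j <- s) u 0 j.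
Proof.
elim: s => [|a s IHs]; first by rewrite !big_nil expr0 mul1r.
by rewrite !big_cons IHs mxE /= exprS; ring.
Qed.

Lemma DpowZ k x (c : R) u : Dpow T k x (c *: u) = c ^+ k * Dpow T k x u.
Proof.
rewrite /Dpow mulr_sumr; apply: eq_bigr => s _.
by rewrite prod_scale_entries size_tuple; ring.
Qed.

Lemma Dpow_dir0 k x : (0 < k)%N -> Dpow T k x 0 = 0.
Proof.
by case: k => // k _; rewrite -(scale0r 0) DpowZ expr0n mul0r.
Qed.

Lemma Dpow0 x u : Dpow T 0 x u = T 0%N x [::].
Proof.
rewrite /Dpow (big_pred1 [tuple]) => [|s]; first by rewrite big_nil mulr1.
by rewrite [s]tuple0 /= eqxx.
Qed.

Lemma Omega_diag (f : 'rV[R]_n -> R) p x : Omega f T p x x = f x.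
Proof.
rewrite /Omega subrr big_nat_cond big1 ?addr0 // => k /andP[/andP[k1 _] _].
by rewrite Dpow_dir0 // mulr0.
Qed.

End DerivativeTensors.

Lemma sum_tuple_rcons (I : finType) (V : nmodType) k (G : seq I -> V) :
  \sum_(s : k.+1.-tuple I) G s = \sum_(s : k.-tuple I) \sum_(i : I) G (rcons s i).
Proof.
pose join (si : k.-tuple I * I) := rcons_tuple si.1 si.2.
pose split (s : k.+1.-tuple I) :=
  (belast_tuple (thead s) (behead_tuple s), last (thead s) (behead s)).
rewrite pair_bigA (reindex join) //=; exists split => [[s i] _ | s _].
  rewrite /split /join /=; case: s => [[|a s] hs]; rewrite /thead (tnth_nth i) /=.
    by congr pair; apply: val_inj.
  by congr pair; [apply: val_inj; rewrite /= belast_rcons | rewrite last_rcons].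
by apply: val_inj; rewrite /join /split /= -lastI; case: s => [[|a s] hs].
Qed.

Section LineDerivative.
Variables (R : realType) (V W : normedModType R).

Lemma is_derive_line (g : V -> W) (x u : V) (t : R) :
  differentiable g (x + t *: u) ->
  is_derive t 1 (fun s : R => g (x + s *: u)) ('d g (x + t *: u) u).
Proof.
move=> dg.
have quotE : (fun h : R => h^-1 *: (((fun s : R => g (x + s *: u)) \o shift t) (h *: 1)
             - g (x + t *: u)))
        = (fun h : R => h^-1 *: ((g \o shift (x + t *: u)) (h *: u) - g (x + t *: u))).
  apply/funext => h /=.
  by rewrite [h *: 1]mulr1 scalerDl addrCA addrA [x + _]addrC.
apply: DeriveDef; first by rewrite /derivable quotE; exact: diff_derivable.
by rewrite /derive quotE -/(derive _ _ _) deriveE.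
Qed.

End LineDerivative.

Lemma diff_row_sum (R : realType) (n : nat) (W : normedModType R)
    (g : 'rV[R]_n -> W) (z u : 'rV[R]_n) :
  'd g z u = \sum_(i < n) u 0 i *: 'd g z (delta_mx 0 i).
Proof.
rewrite {1}(row_sum_delta u) linear_sum; apply: eq_bigr => i _.
by rewrite linearZ.
Qed.

Section TaylorRow.
Variables (R : realType) (n : nat).
Variables (p : nat) (U : set 'rV[R]_n) (f : 'rV[R]_n -> R).
Variable T : nat -> 'rV[R]_n -> seq 'I_n -> R.
Hypothesis Tf : deriv_family p U f T.

Lemma is_derive_Dpow_line k (x u : 'rV[R]_n) (t : R) :
  (k < p)%N -> U (x + t *: u) ->
  is_derive t 1 (fun r : R => Dpow T k (x + r *: u) u) (Dpow T k.+1 (x + t *: u) u).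
Proof.
case: Tf => _ dT kp Uz; set z := x + t *: u.
have dterm (s : k.-tuple 'I_n) : is_derive t 1
    (fun r : R => T k (x + r *: u) s * \prod_(j <- s) u 0 j)
    ('d (fun y => T k y s) z u * \prod_(j <- s) u 0 j).
  have [dTs _] := dT k kp z Uz s (size_tuple s).
  apply: is_derive_eq (is_deriveM (is_derive_line dTs) (is_derive_cst _ t 1)) _.
  by rewrite scaler0 add0r mulrC.
apply: is_derive_eq (is_derive_bigsum _ dterm) _.
rewrite /Dpow (sum_tuple_rcons k (fun s => T k.+1 z s * \prod_(j <- s) u 0 j)).
apply: eq_bigr => s _; rewrite diff_row_sum mulr_suml; apply: eq_bigr => i _.
have [_ ->] := dT k kp z Uz s (size_tuple s).
by rewrite big_rcons /= -[u 0 i *: _]/(u 0 i * _); ring.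
Qed.

Lemma taylor_Omega_le (x y : 'rV[R]_n) (M : R) :
  (forall t : R, 0 <= t <= 1 -> U (x + t *: (y - x))) ->
  (forall t : R, 0 <= t <= 1 ->
     `|Dpow T p (x + t *: (y - x)) (y - x) - Dpow T p x (y - x)| <= M * t) ->
  `|f y - Omega f T p x y| <= M / p.+1`!%:R.
Proof.
move=> Useg DpowL.
pose phi k (t : R) := Dpow T k (x + t *: (y - x)) (y - x).
have phi0 k : phi k 0 = Dpow T k x (y - x) by rewrite /phi scale0r addr0.
have dphi k : (k < p)%N -> forall t : R, 0 <= t <= 1 ->
    is_derive t 1 (phi k) (phi k.+1 t).
  by move=> kp t t01; exact: is_derive_Dpow_line kp (Useg t t01).
have phiL (t : R) : 0 <= t <= 1 -> `|phi p t - phi p 0| <= M * t.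
  by move=> t01; rewrite phi0; exact: DpowL.
have int1 : 0 <= (1 : R) <= 1 by rewrite ler01 lexx.
have := taylor_remainder_le dphi phiL int1; rewrite expr1n mul1r.
have -> : phi 0%N 1 = f y.
  by case: Tf => <- _; rewrite /phi Dpow0 scale1r addrC subrK.
have -> : \sum_(k < p.+1) phi k 0 * (1 ^+ k / k`!%:R) = Omega f T p x y.
  rewrite big_ord_recl phi0 Dpow0 expr0 divr1 mulr1 /Omega.
  case: Tf => -> _; congr (_ + _).
  rewrite big_add1 /= big_mkord; apply: eq_bigr => i _.
  by rewrite phi0 expr1n mul1r mulrC.
by [].
Qed.

End TaylorRow.

Lemma Dpow_lipschitz_scaled (R : realType) (n : nat) (B : 'M[R]_n)
    (T : nat -> 'rV[R]_n -> seq 'I_n -> R) (p : nat) (Lp : R) (P : set 'rV[R]_n) :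
  selfadj_posdef B -> (0 < p)%N ->
  (forall y z, P y -> P z -> forall u, Bnorm B u <= 1 ->
     `|Dpow T p y u - Dpow T p z u| <= Lp * Bnorm B (y - z)) ->
  forall y z u, P y -> P z ->
  `|Dpow T p y u - Dpow T p z u| <= Lp * Bnorm B (y - z) * Bnorm B u ^+ p.
Proof.
move=> posB p0 DpL y z u Py Pz.
have [/(Bnorm_eq0 posB) -> | u_neq0] := eqVneq (Bnorm B u) 0.
  by rewrite !Dpow_dir0 // subrr normr0 Bnorm0 expr0n gtn_eqF // mulr0.
have u_gt0 : 0 < Bnorm B u by rewrite lt_def u_neq0 Bnorm_ge0.
set r := Bnorm B u in u_neq0 u_gt0 *.
pose v := r^-1 *: u.
have Dpow_u w : Dpow T p w u = r ^+ p * Dpow T p w v.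
  by rewrite -DpowZ /v scalerA mulfV // scale1r.
have r_ge0 := ltW u_gt0.
rewrite !Dpow_u -mulrBr normrM ger0_norm ?exprn_ge0 // mulrC.
rewrite ler_pM2r ?exprn_gt0 //; apply: DpL => //.
by rewrite BnormZ ger0_norm ?invr_ge0 // mulVf.
Qed.

Section CompositeTensorStep.
Variables (R : realType) (n : nat) (B : 'M[R]_n) (p : nat) (Lp : R).
Variables (f : 'rV[R]_n -> R) (h : 'rV[R]_n -> \bar R) (U : set 'rV[R]_n).
Variable T : nat -> 'rV[R]_n -> seq 'I_n -> R.
Hypothesis posB : selfadj_posdef B.
Hypothesis p_gt0 : (0 < p)%N.
Hypothesis Lp_ge0 : 0 <= Lp.
Hypothesis h_neq_ninfty : forall y, h y != -oo%E.
Hypothesis h_convex : forall y z (t : R), 0 <= t <= 1 ->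
  (h (t *: y + (1 - t) *: z) <= t%:E * h y + (1 - t)%:E * h z)%E.
Hypothesis f_convex : convex_on U f.
Hypothesis dom_sub_U : dom h `<=` U.
Hypothesis Tf : deriv_family p U f T.
Hypothesis DpL : forall y z, dom h y -> dom h z -> forall u, Bnorm B u <= 1 ->
  `|Dpow T p y u - Dpow T p z u| <= Lp * Bnorm B (y - z).

(* Only meaningful on dom h: [fine] sends +oo to 0. *)
Definition Freal (y : 'rV[R]_n) : R := f y + fine (h y).

Lemma dom_EFin y : dom h y -> h y = (fine (h y))%:E.
Proof.
by move=> hy; rewrite fineK // fin_numE h_neq_ninfty lt_eqF.
Qed.

Lemma dom_of_le (a b : R) y z : dom h z -> (a%:E + h y <= b%:E + h z)%E -> dom h y.
Proof.
move=> hz; rewrite (dom_EFin hz) -EFinD /dom /=.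
by case: (h y) (h_neq_ninfty y) => [r| |] //= _ _; exact: ltry.
Qed.

Lemma dom_convex y z (t : R) : dom h y -> dom h z -> 0 <= t <= 1 ->
  dom h (t *: y + (1 - t) *: z).
Proof.
move=> hy hz t01; apply: le_lt_trans (h_convex y z t01) _.
by rewrite (dom_EFin hy) (dom_EFin hz) -!EFinM -EFinD ltry.
Qed.

Lemma fine_h_convex y z (t : R) : dom h y -> dom h z -> 0 <= t <= 1 ->
  fine (h (t *: y + (1 - t) *: z)) <= t * fine (h y) + (1 - t) * fine (h z).
Proof.
move=> hy hz t01; have := h_convex y z t01.
rewrite (dom_EFin (dom_convex hy hz t01)) (dom_EFin hy) (dom_EFin hz).
by rewrite -!EFinM -EFinD lee_fin.
Qed.

Lemma dom_segment y z (t : R) : dom h y -> dom h z -> 0 <= t <= 1 ->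
  dom h (y + t *: (z - y)).
Proof.
move=> hy hz t01; have -> : y + t *: (z - y) = t *: z + (1 - t) *: y.
  by apply/matrixP => i j; rewrite !mxE; ring.
exact: dom_convex.
Qed.

Lemma taylor_dom a b : dom h a -> dom h b ->
  `|f b - Omega f T p a b| <= Lp * Bnorm B (b - a) ^+ p.+1 / p.+1`!%:R.
Proof.
move=> ha hb; apply: (taylor_Omega_le (M := Lp * Bnorm B (b - a) ^+ p.+1) Tf).
  by move=> t t01; apply: dom_sub_U; exact: dom_segment.
move=> t t01.
apply: le_trans (Dpow_lipschitz_scaled posB p_gt0 DpL _ (dom_segment ha hb t01) ha) _.
rewrite addrC addKr BnormZ ger0_norm; last by case/andP: t01.
by rewrite exprS; lra.
Qed.

Lemma TH_dom x y : dom h x -> is_TH B f h T p (p%:R * Lp) x y -> dom h y.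
Proof.
by move=> hx /(_ x); rewrite subrr Bnorm0 Omega_diag; exact: dom_of_le.
Qed.

Lemma TH_descent x y : dom h x -> is_TH B f h T p (p%:R * Lp) x y ->
  forall z, dom h z -> Freal y <= Freal z + Lp / p`!%:R * Bnorm B (z - x) ^+ p.+1.
Proof.
move=> hx THy z hz; have hy := TH_dom hx THy.
have := THy z; rewrite (dom_EFin hz) (dom_EFin hy) -!EFinD lee_fin => model_le.
have := taylor_dom hx hy; rewrite ler_norml => /andP[_ fy_le].
have := taylor_dom hx hz; rewrite ler_norml => /andP[fz_ge _].
rewrite /Freal.
set c := p.+1`!%:R in model_le fy_le fz_ge *.
set ry := Bnorm B (y - x) ^+ p.+1 in model_le fy_le.
set rz := Bnorm B (z - x) ^+ p.+1 in model_le fz_ge *.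
have c_gt0 : 0 < c by rewrite ltr0n fact_gt0.
have ry_ge0 : 0 <= ry by rewrite exprn_ge0 ?Bnorm_ge0.
have Lp_fact : Lp / p`!%:R = Lp / c + p%:R * Lp / c.
  rewrite /c factS natrM; field.
  by rewrite fact_neq0 addrC natr1 pnatr_eq0.
have ry_le : Lp * ry / c <= p%:R * Lp / c * ry.
  rewrite mulrAC; apply: ler_wpM2r => //; rewrite ler_pM2r ?invr_gt0 //.
  by rewrite ler_peMl // ler1n.
rewrite Lp_fact mulrDl; lra.
Qed.

Section Iterates.
Variable x : nat -> 'rV[R]_n.
Hypothesis dom_x0 : dom h (x 0%N).
Hypothesis TH_x : forall k, is_TH B f h T p (p%:R * Lp) (x k) (x k.+1).

Lemma iterate_dom k : dom h (x k).
Proof. by elim: k => // k IHk; exact: TH_dom IHk (TH_x k). Qed.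

Lemma Freal_iterate_le k : Freal (x k) <= Freal (x 0%N).
Proof.
elim: k => // k; apply: le_trans.
have := TH_descent (iterate_dom k) (TH_x k) (iterate_dom k).
by rewrite subrr Bnorm0 expr0n mulr0 addr0.
Qed.

Lemma gap_recurrence xstar (D : R) : dom h xstar ->
  (forall k, Bnorm B (x k - xstar) <= D) ->
  forall k (t : R), 0 <= t <= 1 ->
  Freal (x k.+1) - Freal xstar
    <= (1 - t) * (Freal (x k) - Freal xstar) + Lp / p`!%:R * D ^+ p.+1 * t ^+ p.+1.
Proof.
move=> hxs xD k t t01; have hxk := iterate_dom k.
have [t0 t1] : 0 <= t /\ t <= 1 by apply/andP.
set z := t *: xstar + (1 - t) *: x k.
have descent := TH_descent hxk (TH_x k) (dom_convex hxs hxk t01).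
have fz := f_convex (dom_sub_U hxs) (dom_sub_U hxk) t01.
have hz := fine_h_convex hxs hxk t01.
have dist_z : Bnorm B (z - x k) ^+ p.+1 <= t ^+ p.+1 * D ^+ p.+1.
  have -> : z - x k = - t *: (x k - xstar).
    by apply/matrixP => i j; rewrite !mxE; ring.
  rewrite BnormZ normrN ger0_norm // -exprMn.
  apply: lerXn2r; rewrite ?nnegrE ?mulr_ge0 ?Bnorm_ge0 //; last exact: ler_wpM2l.
  exact: le_trans (Bnorm_ge0 _ _) (xD k).
have := ler_wpM2l (divr_ge0 Lp_ge0 (ler0n _ p`!)) dist_z.
move: descent fz hz; rewrite /Freal -/z; lra.
Qed.

End Iterates.

End CompositeTensorStep.

Theorem theorem3 (R : realType) (n : nat) (B : 'M[R]_n) (p : nat) (Lp : R)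
  (f : 'rV[R]_n -> R) (h : 'rV[R]_n -> \bar R) (U : set 'rV[R]_n)
  (T : nat -> 'rV[R]_n -> seq 'I_n -> R)
  (xstar : 'rV[R]_n) (x : nat -> 'rV[R]_n) :
  selfadj_posdef B ->
  (2 <= p)%N ->
  0 < Lp ->
  proper_closed_convex h ->
  open U -> convex_set U -> dom h `<=` U ->
  convex_on U f ->
  deriv_family p U f T ->
  (forall y z, dom h y -> dom h z -> forall u, Bnorm B u <= 1 ->
     `|Dpow T p y u - Dpow T p z u| <= Lp * Bnorm B (y - z)) ->
  let F := fun y => ((f y)%:E + h y)%E in
  (forall y, (F xstar <= F y)%E) ->
  dom h (x 0%N) ->
  (forall k, is_TH B f h T p (p%:R * Lp) (x k) (x k.+1)) ->
  let S := [set Bnorm B (y - xstar) | y in [set y | dom h y /\ (F y <= F (x 0%N))%E]] in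
  has_ubound S ->
  let D := sup S in
  forall k, (2 <= k)%N ->
    (F (x k) <= F xstar +
       ((p.+1%:R * (2 * p%:R) ^+ p / p`!%:R) * (Lp * D ^+ p.+1 / (k.-1%:R) ^+ p))%:E)%E.
Proof.
move=> posB p2 Lp_gt0 [h_ninfty [_ [_ h_convex]]] _ _ domU f_convex Tf DpL F Fmin
  dom_x0 TH_x S S_ub D k k2.
have p_gt0 : (0 < p)%N by exact: ltnW.
have Lp_ge0 := ltW Lp_gt0.
have k_gt0 : (0 < k)%N by exact: ltnW.
have FE y : dom h y -> F y = (Freal f h y)%:E.
  by move=> hy; rewrite /F (dom_EFin h_ninfty hy) -EFinD.
have dom_x := iterate_dom h_ninfty dom_x0 TH_x.
have dom_xstar : dom h xstar := dom_of_le h_ninfty dom_x0 (Fmin (x 0%N)).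
have x_le_D j : Bnorm B (x j - xstar) <= D.
  apply: (ub_le_sup S_ub); exists (x j); last by [].
  split; first exact: dom_x.
  rewrite (FE _ (dom_x j)) (FE _ dom_x0) lee_fin.
  exact: (Freal_iterate_le posB p_gt0 Lp_ge0 h_ninfty h_convex domU Tf DpL dom_x0 TH_x).
have D_ge0 : 0 <= D := le_trans (Bnorm_ge0 _ _) (x_le_D 0%N).
have C_ge0 : 0 <= Lp / p`!%:R * D ^+ p.+1 by rewrite mulr_ge0 ?divr_ge0 ?exprn_ge0.
have k1 : (1 <= k.-1)%N by rewrite -ltnS prednK.
have := recurrence_rate p_gt0 C_ge0 (gap_recurrence posB p_gt0 Lp_ge0 h_ninfty
  h_convex f_convex domU Tf DpL dom_x0 TH_x dom_xstar x_le_D) k1.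
rewrite prednK // (FE _ (dom_x k)) (FE _ dom_xstar) -EFinD lee_fin -lerBlDl.
move=> /le_trans; apply.
by rewrite /tensor_rate; lra.
Qed.
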